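(* Let $A:\mathbb{R}^n\rightrightarrows\mathbb{R}^n$ be maximally monotone, let $x^*$ satisfy $0\in A(x^* )$, and let $\tilde A=I-J_A$ with $J_A=(I+A)^{-1}$. Let $r\geqslant2$ and $0<C\leqslant1$. Let $(x_k),(z_k)$ be sequences in $\mathbb{R}^n$ with $x_0=z_0$ satisfying, for all $k\geqslant0$, $$z_k=\frac{k}{r}(x_{k+1}-x_k)+\Big(1+\frac{k}{r}\Big)\tilde A(x_{k+1})+x_{k+1},\qquad z_{k+1}=z_k-\frac{C}{r}\tilde A(x_{k+1}).$$ Then for every $k\geqslant1$, $$\|\tilde A(x_k)\|^2\leqslant\frac{(r^3-r^2)\|x_0-x^*\|^2}{Ck[k+3r-C(k+1)]},\qquad \langle\tilde A(x_k),x_k-x^*\rangle\leqslant\frac{(r^2-r)\|x_0-x^*\|^2}{2Ck}.$$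
   Context: $J_A$ is the resolvent of $A$ and $\tilde A=I-J_A$ its Yosida approximation. $\|\cdot\|$ is the Euclidean norm. *)

From HB Require Import structures.
From mathcomp Require Import all_boot all_order all_algebra.
From mathcomp Require Import reals.
Set Implicit Arguments. Unset Strict Implicit. Unset Printing Implicit Defensive.
Import Order.TTheory GRing.Theory Num.Theory.
Local Open Scope ring_scope.

Section Defs.
Variables (R : realType) (n : nat).

Definition dotp (u v : 'rV[R]_n) : R := (u *m v^T) 0 0.

Definition sqnorm (u : 'rV[R]_n) : R := dotp u u.

(* A set-valued operator A : R^n ⇉ R^n; A x u means u ∈ A(x). *)
Definition setop := 'rV[R]_n -> 'rV[R]_n -> Prop.

Definition monotone_op (A : setop) : Prop :=
  forall x u y v, A x u -> A y v -> 0 <= dotp (x - y) (u - v).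

Definition maximally_monotone (A : setop) : Prop :=
  monotone_op A /\
  forall B : setop, monotone_op B -> (forall x u, A x u -> B x u) ->
    forall x u, B x u -> A x u.

(* J is the resolvent (I + A)^{-1}: its graph is exactly the inverse of
   the graph of I + A, i.e. J x = y  <->  x ∈ y + A(y). *)
Definition is_resolvent (A : setop) (J : 'rV[R]_n -> 'rV[R]_n) : Prop :=
  forall x y, J x = y <-> A y (x - y).

Definition yosida (J : 'rV[R]_n -> 'rV[R]_n) (x : 'rV[R]_n) : 'rV[R]_n :=
  x - J x.

End Defs.

(* The Yosida approximation [Ã = I - J_A] of a monotone [A] is firmly
   nonexpansive: [||Ã x - Ã y||^2 <= <Ã x - Ã y, x - y>], and [Ã x* = 0].
   Feeding these two inequalities into the recursion shows that the
   Lyapunov function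
     [E_k = r(r-1) ||z_k - x*||^2 + 2Ck <Ã x_k, x_k - z_k>
            + Ck(k+r)/r ||Ã x_k||^2]
   is nonincreasing, so [E_k <= E_0 = r(r-1) ||x_0 - x*||^2].  Young's
   inequality absorbs the term [<Ã x_k, z_k - x*>] into [||z_k - x*||^2],
   leaving [2Ck <Ã x_k, x_k - x*> + beta_k ||Ã x_k||^2 <= r(r-1) ||x_0 - x*||^2]
   with [beta_k >= 0]; both rates follow, the first one using
   [||Ã x_k||^2 <= <Ã x_k, x_k - x*>] once more. *)
From mathcomp Require Import all_boot all_order all_algebra.
From mathcomp Require Import reals.
From mathcomp Require Import ring lra.
Set Implicit Arguments. Unset Strict Implicit. Unset Printing Implicit Defensive.
Import Order.TTheory GRing.Theory Num.Theory.
Local Open Scope ring_scope.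

Section InnerProduct.
Variables (R : realType) (n : nat).
Implicit Types (u v : 'rV[R]_n).

Lemma dotpE u v : dotp u v = \sum_i u 0 i * v 0 i.
Proof. by rewrite /dotp !mxE; apply: eq_bigr => i _; rewrite mxE. Qed.

Lemma sqnorm_ge0 u : 0 <= sqnorm u.
Proof. by rewrite /sqnorm dotpE; apply: sumr_ge0 => i _; rewrite -expr2 sqr_ge0. Qed.

Lemma dotpC u v : dotp u v = dotp v u.
Proof. by rewrite !dotpE; apply: eq_bigr => i _; rewrite mulrC. Qed.

Lemma dotpBr u v w : dotp u (v - w) = dotp u v - dotp u w.
Proof. by rewrite !dotpE -sumrB; apply: eq_bigr => i _; rewrite !mxE mulrBr. Qed.

Lemma dotp_young (a b : R) u v : 0 < a ->
  2 * b * dotp u v <= a * sqnorm u + b ^+ 2 / a * sqnorm v.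
Proof.
move=> a_gt0; rewrite -subr_ge0.
have -> : a * sqnorm u + b ^+ 2 / a * sqnorm v - 2 * b * dotp u v
    = \sum_i a * (u 0 i - b / a * v 0 i) ^+ 2.
  rewrite /sqnorm !dotpE !mulr_sumr -big_split -sumrB /=.
  by apply: eq_bigr => i _; field; rewrite gt_eqF.
by apply: sumr_ge0 => i _; rewrite mulr_ge0 ?sqr_ge0 ?ltW.
Qed.

End InnerProduct.

Section Yosida.
Variables (R : realType) (n : nat) (A : setop R n) (J : 'rV[R]_n -> 'rV[R]_n).
Hypotheses (monoA : monotone_op A) (resJ : is_resolvent A J).

Lemma yosida_cocoercive (x y : 'rV[R]_n) :
  sqnorm (yosida J x - yosida J y) <= dotp (yosida J x - yosida J y) (x - y).
Proof.
have Ax : A (J x) (x - J x) by apply/resJ.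
have Ay : A (J y) (y - J y) by apply/resJ.
have := monoA Ax Ay.
have -> : dotp (yosida J x - yosida J y) (x - y) =
    sqnorm (yosida J x - yosida J y) + dotp (J x - J y) (x - J x - (y - J y)).
  rewrite /sqnorm !dotpE -big_split /=; apply: eq_bigr => i _.
  by rewrite /yosida !mxE; ring.
lra.
Qed.

Lemma yosida_eq0 (xstar : 'rV[R]_n) : A xstar 0 -> yosida J xstar = 0.
Proof.
by move=> Axstar; rewrite /yosida (_ : J xstar = xstar) ?subrr //; apply/resJ; rewrite subrr.
Qed.

End Yosida.

Section Lyapunov.
Variables (R : realType) (n : nat) (A : setop R n) (J : 'rV[R]_n -> 'rV[R]_n).
Variables (xstar : 'rV[R]_n) (r C : R) (x z : nat -> 'rV[R]_n).
Hypotheses (monoA : monotone_op A) (resJ : is_resolvent A J) (Axstar : A xstar 0).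
Hypothesis zE : forall k : nat,
  z k = (k%:R / r) *: (x k.+1 - x k) + (1 + k%:R / r) *: yosida J (x k.+1) + x k.+1.
Hypothesis z_succ : forall k : nat, z k.+1 = z k - (C / r) *: yosida J (x k.+1).

Local Notation g k := (yosida J (x k)).

Definition lyapunov (k : nat) : R :=
  r * (r - 1) * sqnorm (z k - xstar) + 2 * C * k%:R * dotp (g k) (x k - z k)
  + C * k%:R * (k%:R + r) / r * sqnorm (g k).

Lemma lyapunov_succ k : r != 0 -> lyapunov k = lyapunov k.+1
  + 2 * C * k%:R * (k%:R + r) / r
      * (dotp (g k.+1 - g k) (x k.+1 - x k) - sqnorm (g k.+1 - g k))
  + 2 * C * (r - 1) * (dotp (g k.+1) (x k.+1 - xstar) - sqnorm (g k.+1))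
  + 3 * C * k%:R * (k%:R + r) / r * sqnorm (g k.+1 - g k)
  + C * ((4 * r + 1) * (r - 1) - (r + 1) * C + 2 * (r - 1 - C) * k%:R) / r
      * sqnorm (g k.+1).
Proof.
move=> r_neq0.
rewrite /lyapunov z_succ zE -[k.+1%:R]natr1 /sqnorm !dotpE -!sumrB !mulr_sumr -!big_split /=.
by apply: eq_bigr => i _; rewrite !mxE; field.
Qed.

Lemma lyapunov_succ_le k : 2 <= r -> 0 < C -> C <= 1 -> lyapunov k.+1 <= lyapunov k.
Proof.
move=> r_ge2 C_gt0 C_le1.
have k_ge0 : 0 <= k%:R :> R := ler0n _ _.
have cocoS : 0 <= dotp (g k.+1 - g k) (x k.+1 - x k) - sqnorm (g k.+1 - g k).
  by rewrite subr_ge0 (yosida_cocoercive monoA resJ).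
have cocoX : 0 <= dotp (g k.+1) (x k.+1 - xstar) - sqnorm (g k.+1).
  have := yosida_cocoercive monoA resJ (x k.+1) xstar.
  by rewrite (yosida_eq0 resJ Axstar) !subr0 subr_ge0.
have w_ge0 : 0 <= C * k%:R * (k%:R + r) / r.
  by rewrite !mulr_ge0 ?invr_ge0 //; lra.
have c_ge0 : 0 <= C * ((4 * r + 1) * (r - 1) - (r + 1) * C + 2 * (r - 1 - C) * k%:R) / r.
  have kC_ge0 : 0 <= (r - 1 - C) * k%:R by rewrite mulr_ge0 //; lra.
  by rewrite !mulr_ge0 ?invr_ge0 //; nra.
have rC_ge0 : 0 <= C * (r - 1) by rewrite mulr_ge0 //; lra.
have r_neq0 : r != 0 by rewrite gt_eqF //; lra.
have succE := lyapunov_succ k r_neq0.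
have term1 := mulr_ge0 w_ge0 cocoS.
have term2 := mulr_ge0 rC_ge0 cocoX.
have term3 := mulr_ge0 w_ge0 (sqnorm_ge0 (g k.+1 - g k)).
have term4 := mulr_ge0 c_ge0 (sqnorm_ge0 (g k.+1)).
lra.
Qed.

Lemma lyapunov_le0 k : 2 <= r -> 0 < C -> C <= 1 -> lyapunov k <= lyapunov 0%N.
Proof.
move=> r_ge2 C_gt0 C_le1; elim: k => [//|k IHk].
exact: le_trans (lyapunov_succ_le k r_ge2 C_gt0 C_le1) IHk.
Qed.

Lemma lyapunov0 : x 0%N = z 0%N -> lyapunov 0%N = r * (r - 1) * sqnorm (x 0%N - xstar).
Proof. by move=> x0; rewrite /lyapunov -x0 subrr !(mulr0, mul0r, addr0). Qed.

Lemma lyapunov_ge k : 1 < r ->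
  2 * C * k%:R * dotp (g k) (x k - xstar)
  + (C * k%:R * (k%:R + r) / r - (C * k%:R) ^+ 2 / (r * (r - 1))) * sqnorm (g k)
  <= lyapunov k.
Proof.
move=> r_gt1.
have rr_gt0 : 0 < r * (r - 1) by rewrite mulr_gt0 //; lra.
have young := dotp_young (C * k%:R) (z k - xstar) (g k) rr_gt0.
rewrite dotpC in young.
have xzE : x k - z k = (x k - xstar) - (z k - xstar) by rewrite opprB addrA subrK.
rewrite /lyapunov xzE (dotpBr _ (x k - xstar)).
lra.
Qed.

End Lyapunov.

Lemma rates_of_lyapunov_bound (R : realType) (r C k p q N : R) :
  2 <= r -> 0 < C -> C <= 1 -> 1 <= k -> 0 <= p -> p <= q ->
  2 * C * k * q + (C * k * (k + r) / r - (C * k) ^+ 2 / (r * (r - 1))) * p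
    <= r * (r - 1) * N ->
  p <= (r ^+ 3 - r ^+ 2) * N / (C * k * (k + 3 * r - C * (k + 1)))
  /\ q <= (r ^+ 2 - r) * N / (2 * C * k).
Proof.
move=> r_ge2 C_gt0 C_le1 k_ge1 p_ge0 p_le_q.
set beta := _ - _ => bound.
have r_neq0 : r != 0 by rewrite gt_eqF //; lra.
have r1_neq0 : r - 1 != 0 by rewrite gt_eqF // subr_gt0; lra.
have Ck_gt0 : 0 < C * k by rewrite mulr_gt0 //; lra.
have beta_ge0 : 0 <= beta.
  have -> : beta = C * k * (k * (r - 1 - C) + r * (r - 1)) / (r * (r - 1)).
    by rewrite /beta; field; rewrite r_neq0 r1_neq0.
  by rewrite divr_ge0 ?mulr_ge0 //; nra.
have beta_p_ge0 := mulr_ge0 beta_ge0 p_ge0.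
split; last by rewrite ler_pdivlMr; nra.
have gain : C * k * (k + 3 * r - C * (k + 1)) <= r * (2 * C * k + beta).
  rewrite -subr_ge0.
  have -> : r * (2 * C * k + beta) - C * k * (k + 3 * r - C * (k + 1))
      = C * C * k * (k * (r - 2) + r - 1) / (r - 1).
    by rewrite /beta; field; rewrite r_neq0 r1_neq0.
  by rewrite divr_ge0 ?mulr_ge0 //; nra.
have D_gt0 : 0 < C * k * (k + 3 * r - C * (k + 1)) by rewrite mulr_gt0 //; nra.
have energy : (2 * C * k + beta) * p <= r * (r - 1) * N.
  have twoCk_ge0 : 0 <= 2 * C * k by rewrite -mulrA mulr_ge0 // ltW.
  by have := ler_wpM2l twoCk_ge0 p_le_q; lra.
have r_ge0 : 0 <= r by lra.
have r_energy := ler_wpM2l r_ge0 energy.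
have gain_p := ler_wpM2r p_ge0 gain.
rewrite ler_pdivlMr //.
lra.
Qed.

Theorem theorem11 (R : realType) (n : nat) (A : setop R n)
  (J : 'rV[R]_n -> 'rV[R]_n) (xstar : 'rV[R]_n) (r C : R)
  (x z : nat -> 'rV[R]_n) :
  maximally_monotone A ->
  is_resolvent A J ->
  A xstar 0 ->
  2 <= r -> 0 < C -> C <= 1 ->
  x 0%N = z 0%N ->
  (forall k : nat,
     z k = (k%:R / r) *: (x k.+1 - x k) + (1 + k%:R / r) *: yosida J (x k.+1)
           + x k.+1) ->
  (forall k : nat, z k.+1 = z k - (C / r) *: yosida J (x k.+1)) ->
  forall k : nat, (1 <= k)%N ->
    sqnorm (yosida J (x k))
      <= (r ^+ 3 - r ^+ 2) * sqnorm (x 0%N - xstar)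
         / (C * k%:R * (k%:R + 3 * r - C * (k%:R + 1)))
    /\
    dotp (yosida J (x k)) (x k - xstar)
      <= (r ^+ 2 - r) * sqnorm (x 0%N - xstar) / (2 * C * k%:R).
Proof.
(* Maximality only guarantees that the resolvent is everywhere defined,
   which the total function [J] already is. *)
move=> [monoA _] resJ Axstar r_ge2 C_gt0 C_le1 x0 zE z_succ k k_ge1.
have r_gt1 : 1 < r by lra.
have coco := yosida_cocoercive monoA resJ (x k) xstar.
rewrite (yosida_eq0 resJ Axstar) !subr0 in coco.
have lyap_bound := le_trans (lyapunov_ge J xstar C x z k r_gt1)
  (lyapunov_le0 monoA resJ Axstar zE z_succ k r_ge2 C_gt0 C_le1).
rewrite lyapunov0 // in lyap_bound.
apply: rates_of_lyapunov_bound lyap_bound => //; first by rewrite ler1n.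
exact: sqnorm_ge0.
Qed.
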